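(* Let $a_1,\dots,a_n\in\overline{K}$ ($n\ge2$) be pairwise distinct with $\nu(a_i)>0$ for all $i$ (a bouquet of branches passing through the origin), let $A$ be its associated magic matrix and $(\mathcal R,\gamma)$ its associated tree. Then $A$ induces an automorphism of $F=\{u\in\mathbf{C}^n:\sum_i u_i=0\}$ whose eigenvalues are the strictly positive rational numbers $$\sum_{T\in\mathcal R,\ T\supset T_1}\gamma(T)\,n(T),\qquad T_1\in\mathcal R.$$ If moreover all $a_i\in\mathbf C[[x]]$ (a bouquet of smooth curves through the origin), these eigenvalues are strictly positive integers.
   Context: $\overline{K}=\bigcup_{d\ge1}\mathbf{C}[[x^{1/d}]][1/x]$ with valuation $\nu$. Put $m_{i,j}=\nu(a_i-a_j)$ ($i\ne j$), $m_i=\sum_{j\ne i}m_{i,j}$. The associated magic matrix is $A=(\alpha_{i,j})$ with $\alpha_{i,j}=-m_{i,j}$ for $i\neq j$ and $\alpha_{i,i}=m_i$, viewed as an endomorphism of $\mathbf C^n$ in the canonical basis. Let $T_0=\{1,\dots,n\}$. A subset $T\subset T_0$ is a ''rameau'' if $|T|\ge2$ and for all $i,j\in T$, $i\ne j$, and $k\notin T$: $m_{i,j}>m_{i,k}=m_{j,k}$; $\mathcal R$ is the set of rameaux (it contains $T_0$, and any two are disjoint or nested). For $T\in\mathcal R$, $\alpha(T)=\inf\{m_{i,j}:i,j\in T,i\ne j\}$; for $T\ne T_0$, $\gamma(T)=\alpha(T)-\alpha(T')$ where $T'$ is the smallest element of $\mathcal R$ strictly containing $T$, and $\gamma(T_0)=\alpha(T_0)$.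 $n(T)$ denotes the cardinality of $T$. *)

From HB Require Import structures.
From mathcomp Require Import all_boot all_order all_algebra.
From mathcomp Require Import complex Rstruct.
From Stdlib Require Import ClassicalEpsilon.
Set Implicit Arguments. Unset Strict Implicit. Unset Printing Implicit Defensive.
Import Order.TTheory GRing.Theory Num.Theory.
Local Open Scope ring_scope.

Definition CC : Type := (Rdefinitions.R)[i].

(* A Puiseux series sum_q f(q) x^q is represented by its coefficient function
   f : rat -> CC.  It lies in K-bar = U_d C[[x^(1/d)]][1/x] iff there are
   d >= 1 and N : int with support(f) inside {k/d : k in Z, k >= N}. *)
Definition is_puiseux (f : rat -> CC) : Prop :=
  exists d : nat, (0 < d)%N /\ exists N : int,
    forall q : rat, f q != 0 -> exists k : int, q = k%:~R / d%:R /\ N <= k.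

Definition is_power_series (f : rat -> CC) : Prop :=
  forall q : rat, f q != 0 -> exists k : nat, q = k%:R.

Definition psub (f g : rat -> CC) : rat -> CC := fun q => f q - g q.

Definition is_val (f : rat -> CC) (q : rat) : Prop :=
  f q != 0 /\ forall r : rat, f r != 0 -> q <= r.

(* the valuation nu(f) (meaningful for f nonzero Puiseux series) *)
Definition nu (f : rat -> CC) : rat := epsilon (inhabits 0) (is_val f).

Section Bouquet.
Variable n : nat.
Variable a : 'I_n -> rat -> CC.

Definition mm (i j : 'I_n) : rat := nu (psub (a i) (a j)).

Definition mrow (i : 'I_n) : rat := \sum_(j | j != i) mm i j.

Definition magic : 'M[CC]_n :=
  \matrix_(i, j) (if i == j then ratr (mrow i) else - ratr (mm i j)).

Definition rameau (T : {set 'I_n}) : bool :=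
  (2 <= #|T|)%N &&
  [forall i : 'I_n, forall j : 'I_n, forall k : 'I_n,
    [&& i \in T, j \in T, i != j & k \notin T] ==>
    (mm i k == mm j k) && (mm i k < mm i j)].

Definition alphaT (T : {set 'I_n}) : rat :=
  let s := [seq mm p.1 p.2 | p <- enum [set p : 'I_n * 'I_n |
              [&& p.1 \in T, p.2 \in T & p.1 != p.2]]] in
  foldr Num.min (head 0 s) s.

(* T' = smallest rameau strictly containing T (rameaux are nested, so
   minimal cardinality = smallest for inclusion) *)
Definition parentT (T : {set 'I_n}) : {set 'I_n} :=
  [arg min_(U < [set: 'I_n] | rameau U && (T \proper U)) #|U|].

Definition gammaT (T : {set 'I_n}) : rat :=
  if T == [set: 'I_n] then alphaT T else alphaT T - alphaT (parentT T).

Definition eigval (T1 : {set 'I_n}) : rat :=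
  \sum_(T : {set 'I_n} | rameau T && (T1 \subset T)) gammaT T * (#|T|)%:R.

End Bouquet.

Definition inF (n : nat) (u : 'cV[CC]_n) : Prop := \sum_i u i 0 = 0.

From mathcomp Require Import all_boot all_order all_algebra.
From mathcomp Require Import complex Rstruct ring zify.
From Stdlib Require Import ClassicalEpsilon FunctionalExtensionality.
Set Implicit Arguments. Unset Strict Implicit. Unset Printing Implicit Defensive.
Import Order.TTheory GRing.Theory Num.Theory.
Local Open Scope ring_scope.

(* The valuations [m i j] form a symmetric positive ultrametric, and the rameaux
   are the nodes of its tree.  For a rameau [T] and [i] in [T], let [C] be the son
   of [T] containing [i] and [D := T :\: C]: then [m j k = alphaT T] whenever [j]
   is in [C] and [k] in [D], while [m j k] does not depend on [j] in [T] when [k]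
   lies outside [T].  Hence [#|D| 1_C - #|C| 1_D] lies in [F] and is an
   eigenvector of [A], with eigenvalue [alphaT T * #|T| + sum_(k \notin T) m i k],
   which telescopes along the chain of rameaux above [T] to
   [sum_(T' \supset T) gamma(T') n(T')].  Conversely, [A] is symmetric, so an
   eigenvector [u] in [F] for any other eigenvalue is orthogonal to all these
   vectors.  Descending the tree from [T_0] this forces [sum_(k in T) u k = 0] for
   every rameau [T], and the smallest rameau containing [i], whose son at [i] is
   [{i}], then gives [u i = 0].  All eigenvalues being positive, [A] is injective
   on [F], and therefore onto [F]. *)

Definition on_grid (d : nat) (f : rat -> CC) : Prop :=
  forall q, f q != 0 -> exists k : nat, q = k%:R / d%:R.

Lemma puiseux_on_grid f : is_puiseux f -> (forall q, f q != 0 -> 0 < q) ->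
  exists2 d : nat, (0 < d)%N & on_grid d f.
Proof.
move=> [d [d0 [N fN]]] fpos; exists d => // q /[dup] /fpos q0 /fN [k [qk _]].
have k0 : 0 <= k.
  by move: q0; rewrite qk pmulr_lgt0 ?invr_gt0 ?ltr0n // ltr0z => /ltW.
by case: k k0 qk => // k _ ->; exists k.
Qed.

Lemma on_gridMr d e f : (0 < d)%N -> (0 < e)%N -> on_grid d f -> on_grid (d * e) f.
Proof.
move=> d0 e0 fd q /fd [k ->]; exists (k * e)%N; rewrite !natrM; field.
by rewrite !pnatr_eq0 -!lt0n d0 e0.
Qed.

Lemma psub_neq0 f g q : psub f g q != 0 -> f q != 0 \/ g q != 0.
Proof.
rewrite /psub; have [->|] := eqVneq (f q) 0; last by left.
by rewrite sub0r oppr_eq0; right.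
Qed.

Lemma on_grid_psub d f g : on_grid d f -> on_grid d g -> on_grid d (psub f g).
Proof. by move=> fd gd q /psub_neq0 [/fd|/gd]. Qed.

Lemma on_grid_is_val d f q0 : (0 < d)%N -> on_grid d f -> f q0 != 0 ->
  exists q, is_val f q.
Proof.
move=> d0 fd fq0.
have exk : exists k : nat, f (k%:R / d%:R) != 0.
  by have [k qk] := fd _ fq0; exists k; rewrite -qk.
case: (ex_minnP exk) => k fk kmin; exists (k%:R / d%:R); split=> // r /[dup] /fd [k' ->].
by move=> /kmin; rewrite ler_pM2r ?invr_gt0 ?ltr0n // ler_nat.
Qed.

Lemma is_val_inj f p q : is_val f p -> is_val f q -> p = q.
Proof. by move=> [fp pmin] [fq qmin]; apply/le_anti; rewrite pmin // qmin. Qed.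

Lemma nuP f q : is_val f q -> is_val f (nu f).
Proof. by move=> fq; apply: epsilon_spec; exists q. Qed.

Lemma is_val_psubC f g q : is_val (psub f g) q -> is_val (psub g f) q.
Proof.
have E r : psub g f r = - psub f g r by rewrite /psub opprB.
by case=> fgq qmin; split=> [|r]; rewrite E oppr_eq0 //; apply: qmin.
Qed.

Lemma is_val_psub_ultra f g h p q r : is_val (psub f g) p -> is_val (psub g h) q ->
  is_val (psub f h) r -> Num.min p q <= r.
Proof.
move=> [_ pmin] [_ qmin] [fhr _].
have E : psub f h r = psub f g r + psub g h r by rewrite /psub; ring.
rewrite E in fhr; have [fg0|/pmin pr] := eqVneq (psub f g r) 0; last by rewrite ge_min pr.
by rewrite fg0 add0r in fhr; rewrite ge_min qmin ?orbT.
Qed.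

Section Bouquet.
Variables (n : nat) (a : 'I_n -> rat -> CC).
Hypothesis a_puiseux : forall i, is_puiseux (a i).
Hypothesis a_inj : forall i j, a i = a j -> i = j.
Hypothesis a_pos : forall i (q : rat), a i q != 0 -> 0 < q.

Lemma mm_is_val i j : i != j -> is_val (psub (a i) (a j)) (mm a i j).
Proof.
move=> ij; have [q0 aij_q0] : exists q, psub (a i) (a j) q != 0.
  apply: NNPP => aij0; move/eqP: ij; apply; apply: a_inj.
  apply: functional_extensionality => q; apply/eqP; rewrite -subr_eq0.
  by apply/negPn/negP => nz; apply: aij0; exists q.
have [di di0 gi] := puiseux_on_grid (a_puiseux i) (a_pos (i := i)).
have [dj dj0 gj] := puiseux_on_grid (a_puiseux j) (a_pos (i := j)).
have dij0 : (0 < di * dj)%N by rewrite muln_gt0 di0.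
have [q aij_q] : exists q, is_val (psub (a i) (a j)) q.
  apply: (on_grid_is_val dij0 _ aij_q0); apply: on_grid_psub; first exact: on_gridMr.
  by rewrite mulnC; apply: on_gridMr.
exact: nuP aij_q.
Qed.

Lemma mm_gt0 i j : i != j -> 0 < mm a i j.
Proof. by move=> /mm_is_val [/psub_neq0 [] /a_pos]. Qed.

Lemma mmC i j : mm a i j = mm a j i.
Proof.
have [<-//|ij] := eqVneq i j; have ji : j != i by rewrite eq_sym.
exact: is_val_inj (is_val_psubC (mm_is_val ij)) (mm_is_val ji).
Qed.

Lemma mm_ultra i j k : i != j -> j != k -> i != k ->
  Num.min (mm a i j) (mm a j k) <= mm a i k.
Proof.
by move=> ij jk ik; apply: is_val_psub_ultra (mm_is_val ij) (mm_is_val jk) (mm_is_val ik).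
Qed.

Lemma mm_nat i j : (forall i, is_power_series (a i)) -> i != j ->
  exists k : nat, mm a i j = k%:R.
Proof. by move=> a_ps /mm_is_val [/psub_neq0 [] /a_ps]. Qed.

End Bouquet.

Lemma foldr_min_le (R : realDomainType) (s : seq R) x0 y : y \in s -> foldr Num.min x0 s <= y.
Proof.
elim: s => //= x s IH; rewrite in_cons => /orP [/eqP->|/IH h].
  by rewrite ge_min lexx.
by rewrite ge_min h orbT.
Qed.

Lemma foldr_min_mem (R : realDomainType) (s : seq R) x0 : foldr Num.min x0 s \in x0 :: s.
Proof.
elim: s => /= [|x s IH]; first by rewrite inE.
rewrite minEle; case: ifP => _; first by rewrite !inE eqxx orbT.
by move: IH; rewrite !inE => /orP [->|->]; rewrite ?orbT.
Qed.

Lemma sum_mulr_indicator (R : pzSemiRingType) (I : finType) (A : {pred I}) (f : I -> R) :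
  \sum_k f k * (k \in A)%:R = \sum_(k in A) f k.
Proof.
by rewrite [RHS]big_mkcond; apply: eq_bigr => k _; case: (k \in A); rewrite ?mulr1 ?mulr0.
Qed.

Lemma sum_indicator (R : pzSemiRingType) (I : finType) (A : {pred I}) :
  \sum_k ((k \in A)%:R : R) = #|A|%:R.
Proof. by rewrite -sumr_const [RHS]big_mkcond; apply: eq_bigr => k _; case: (k \in A). Qed.

Lemma symmx_eigen_orth (F : fieldType) (k : nat) (M : 'M[F]_k) (u w : 'cV[F]_k) lam mu :
  M^T = M -> M *m u = lam *: u -> M *m w = mu *: w -> lam != mu -> u^T *m w = 0.
Proof.
move=> Msym Mu Mw lam_mu.
have /eqP : (M *m u)^T *m w = u^T *m (M *m w) by rewrite trmx_mul Msym mulmxA.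
rewrite Mu Mw linearZ /= -scalemxAl -scalemxAr -subr_eq0 -scalerBl scaler_eq0.
by rewrite subr_eq0 (negbTE lam_mu) => /eqP.
Qed.

(* [M + J/k], with [J] the all-ones matrix, agrees with [M] on [F] and
   preserves coordinate sums, so it is injective, hence invertible. *)
Lemma inF_onto (k : nat) (M : 'M[CC]_k) : (0 < k)%N ->
  (forall u, inF (M *m u)) -> (forall u, inF u -> M *m u = 0 -> u = 0) ->
  forall v, inF v -> exists2 u, inF u & M *m u = v.
Proof.
move=> k0 MF Minj v vF.
pose B := M + k%:R^-1 *: const_mx 1.
have k_neq0 : (k%:R : CC) != 0 by rewrite pnatr_eq0 -lt0n.
have const_mul (u : 'cV[CC]_k) : (const_mx 1 : 'M[CC]_k) *m u = const_mx (\sum_j u j 0).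
  by apply/matrixP => i z; rewrite (ord1 z) !mxE; apply: eq_bigr => j _; rewrite mxE mul1r.
have sumB (u : 'cV[CC]_k) : \sum_j (B *m u) j 0 = \sum_j u j 0.
  rewrite mulmxDl -scalemxAl const_mul.
  rewrite (eq_bigr (fun j => (M *m u) j 0 + k%:R^-1 * \sum_i u i 0)) => [|j _]; last first.
    by rewrite !mxE.
  by rewrite big_split /= MF add0r sumr_const card_ord -mulrnAl -mulr_natr mulVf ?mul1r.
have BE (u : 'cV[CC]_k) : inF u -> B *m u = M *m u.
  move=> uF; rewrite mulmxDl -scalemxAl const_mul uF.
  by rewrite (_ : const_mx 0 = 0) ?scaler0 ?addr0 //; apply/matrixP => i j; rewrite !mxE.
have Bunit : B \in unitmx.
  rewrite -unitmx_tr -row_free_unit; apply: inj_row_free => u /(congr1 trmx).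
  rewrite trmx_mul trmxK trmx0 => Bu0; apply: trmx_inj; rewrite trmx0.
  have uF : inF u^T by rewrite /inF -sumB Bu0; apply: big1 => j _; rewrite mxE.
  by apply: Minj => //; rewrite -BE.
have uF : inF (invmx B *m v) by rewrite /inF -sumB mulKVmx.
by exists (invmx B *m v) => //; rewrite -BE // mulKVmx.
Qed.

Section Ultrametric.
Variables (n : nat) (a : 'I_n -> rat -> CC).
Local Notation m := (mm a).
Hypothesis msym : forall i j, m i j = m j i.
Hypothesis mpos : forall i j, i != j -> 0 < m i j.
Hypothesis multra : forall i j k, i != j -> j != k -> i != k ->
  Num.min (m i j) (m j k) <= m i k.
Hypothesis n_ge2 : (2 <= n)%N.
Implicit Types (T U : {set 'I_n}) (i j k : 'I_n).

Lemma alphaT_le T i j : i \in T -> j \in T -> i != j -> alphaT a T <= m i j.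
Proof.
move=> iT jT ij; apply: foldr_min_le.
by apply/mapP; exists (i, j); rewrite ?mem_enum ?inE /= ?iT ?jT.
Qed.

Lemma alphaT_attained T : (2 <= #|T|)%N ->
  exists i j, [/\ i \in T, j \in T, i != j & alphaT a T = m i j].
Proof.
move=> /card_gt1P [i [j [iT jT ij]]].
set s := [seq m p.1 p.2 | p <- enum [set p : 'I_n * 'I_n |
              [&& p.1 \in T, p.2 \in T & p.1 != p.2]]].
have s_ij : m i j \in s by apply/mapP; exists (i, j); rewrite ?mem_enum ?inE /= ?iT ?jT.
have : alphaT a T \in s.
  change (foldr Num.min (head 0 s) s \in s).
  have := foldr_min_mem s (head 0 s); rewrite inE => /orP [/eqP->|//].
  by case: s s_ij => //= x s _; rewrite inE eqxx.
case/mapP => [[p q]]; rewrite mem_enum inE /= => /and3P [pT qT pq] ->.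
by exists p, q.
Qed.

Lemma ultra_lt (x : rat) i j k : i != j -> j != k -> i != k ->
  x < m i j -> x < m j k -> x < m i k.
Proof.
move=> ij jk ik xij xjk; apply: lt_le_trans (multra ij jk ik).
by rewrite lt_min xij xjk.
Qed.

Lemma rameauP T : rameau a T -> forall i j k, i \in T -> j \in T -> i != j ->
  k \notin T -> m i k = m j k /\ m i k < m i j.
Proof.
case/andP => _ /forallP rT i j k iT jT ij kT.
move: (rT i) => /forallP /(_ j) /forallP /(_ k).
by rewrite iT jT ij kT /= => /andP [/eqP -> ?].
Qed.

Lemma rameau_card T : rameau a T -> (2 <= #|T|)%N.
Proof. by case/andP. Qed.

Lemma rameau_neq0 T : rameau a T -> exists i, i \in T.
Proof. by move=> /rameau_card /ltnW /card_gt0P. Qed.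

Lemma rameau_setT : rameau a [set: 'I_n].
Proof.
apply/andP; split; first by rewrite cardsT card_ord.
by apply/'forall_'forall_'forall_implyP => i j k; rewrite !in_setT /= !andbF.
Qed.

Lemma rameau_laminar U V x : rameau a U -> rameau a V -> x \in U -> x \in V ->
  (U \subset V) || (V \subset U).
Proof.
move=> rU rV xU xV; apply/negPn/negP; rewrite negb_or => /andP [].
case/subsetPn => y yU yV /subsetPn [z zV zU].
have xy : x != y by apply: contraNneq yV => <-.
have xz : x != z by apply: contraNneq zU => <-.
have [_ lt_xy_xz] := rameauP rV xV zV xz yV.
have [_ lt_xz_xy] := rameauP rU xU yU xy zU.
by move: (lt_trans lt_xy_xz lt_xz_xy); rewrite ltxx.
Qed.

(* The son of [T], in the tree of rameaux, containing [i]. *)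
Definition child T i := [set j in T | (j == i) || (alphaT a T < m i j)].

Definition mout T i := \sum_(k | k \notin T) m i k.

Lemma child_subset T i : child T i \subset T.
Proof. by apply/subsetP => j; rewrite inE => /andP []. Qed.

Lemma child_self T i : i \in T -> i \in child T i.
Proof. by move=> iT; rewrite inE iT eqxx. Qed.

Lemma mm_notin_child T i k : i \in T -> k \in T -> k \notin child T i ->
  m i k = alphaT a T.
Proof.
move=> iT kT; rewrite inE kT /= negb_or -leNgt => /andP [ki mik_le].
by apply/le_anti; rewrite mik_le alphaT_le // eq_sym.
Qed.

Lemma mm_in_child T i j : i \in T -> j \in child T i -> j != i ->
  alphaT a T < m i j.
Proof. by move=> iT; rewrite inE => /andP [_ /orP [->|]]. Qed.

Lemma mm_child_cross T i j k : i \in T -> j \in child T i -> k \in T ->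
  k \notin child T i -> m j k = alphaT a T.
Proof.
move=> iT jC kT kC; have mik := mm_notin_child iT kT kC.
have [->//|ji] := eqVneq j i.
have jT : j \in T by move: jC; rewrite inE => /andP [].
have ki : k != i by apply: contraNneq kC => ->; exact: child_self.
have jk : j != k by apply: contraNneq kC => <-.
have ij : i != j by rewrite eq_sym.
have ik : i != k by rewrite eq_sym.
apply/le_anti; rewrite alphaT_le // andbT leNgt; apply/negP => alpha_lt.
have := ultra_lt ij jk ik (mm_in_child iT jC ji) alpha_lt.
by rewrite mik ltxx.
Qed.

Lemma child_proper T i : rameau a T -> i \in T -> child T i \proper T.
Proof.
move=> rT iT; apply/properP; split; first exact: child_subset.
have [p [q [pT qT pq alpha_pq]]] := alphaT_attained (rameau_card rT).
have notin_child k : k \in T -> k != i -> alphaT a T = m i k -> k \notin child T i.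
  by move=> kT ki mik; rewrite inE kT negb_or ki -mik ltxx.
have [pi|pi] := eqVneq p i.
  by exists q => //; apply: notin_child => //; rewrite -pi // eq_sym.
have [qi|qi] := eqVneq q i.
  by exists p => //; apply: notin_child => //; rewrite -qi // msym.
case: (boolP (p \in child T i)) => pC; last by exists p.
case: (boolP (q \in child T i)) => qC; last by exists q.
have iq : i != q by rewrite eq_sym.
have alpha_pi : alphaT a T < m p i by rewrite msym; apply: mm_in_child.
by have := ultra_lt pi iq pq alpha_pi (mm_in_child iT qC qi); rewrite -alpha_pq ltxx.
Qed.

Lemma child_rameau T i : rameau a T -> i \in T -> (2 <= #|child T i|)%N ->
  rameau a (child T i).
Proof.
move=> rT iT C2; apply/andP; split=> //.
apply/'forall_'forall_'forall_implyP => x y k /and4P [xC yC xy kC].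
have xT : x \in T by move: xC; rewrite inE => /andP [].
have yT : y \in T by move: yC; rewrite inE => /andP [].
have alpha_xy : alphaT a T < m x y.
  have [xi|xi] := eqVneq x i.
    by rewrite xi; apply: mm_in_child; rewrite // -xi eq_sym.
  have [yi|yi] := eqVneq y i.
    by rewrite yi msym; apply: mm_in_child; rewrite // -yi.
  have iy : i != y by rewrite eq_sym.
  have alpha_xi : alphaT a T < m x i by rewrite msym; apply: mm_in_child.
  exact: ultra_lt xi iy xy alpha_xi (mm_in_child iT yC yi).
have [kT|kT] := boolP (k \in T).
  by rewrite (mm_child_cross iT xC kT kC) (mm_child_cross iT yC kT kC) eqxx.
by have [mxk_myk ->] := rameauP rT xT yT xy kT; rewrite mxk_myk eqxx.
Qed.

Lemma rameau_leaf i : exists2 T, rameau a T & child T i = [set i].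
Proof.
case: (@arg_minnP _ [set: 'I_n] (fun U => rameau a U && (i \in U)) (fun U => #|U|)).
  by rewrite rameau_setT in_setT.
move=> T /andP [rT iT] Tmin; exists T => //.
apply/eqP; rewrite eq_sym eqEcard sub1set child_self // cards1 leqNgt.
apply/negP => C2; have := Tmin (child T i); rewrite child_rameau // child_self //.
move=> /(_ isT) /leq_ltn_trans /(_ (proper_card (child_proper rT iT))).
by rewrite ltnn.
Qed.

Lemma parentP T : T != [set: 'I_n] ->
  [/\ rameau a (parentT a T), T \proper parentT a T &
     forall U, rameau a U -> T \proper U -> (#|parentT a T| <= #|U|)%N].
Proof.
move=> nT; rewrite /parentT; case: arg_minnP; first by rewrite rameau_setT properT.
by move=> P /andP [rP TP] Pmin; split=> // U rU TU; apply: Pmin; rewrite rU.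
Qed.

Lemma parent_subset T U : rameau a T -> T != [set: 'I_n] -> rameau a U ->
  T \proper U -> parentT a T \subset U.
Proof.
move=> rT nT rU TU; have [rP TP Pmin] := parentP nT.
have [i iT] := rameau_neq0 rT.
have iP := subsetP (proper_sub TP) i iT; have iU := subsetP (proper_sub TU) i iT.
case/orP: (rameau_laminar rP rU iP iU) => // UP.
by rewrite (_ : parentT a T = U) //; apply/eqP; rewrite eq_sym eqEcard UP Pmin.
Qed.

Lemma child_parent T i : rameau a T -> T != [set: 'I_n] -> i \in T ->
  child (parentT a T) i = T.
Proof.
move=> rT nT iT; have [rP TP Pmin] := parentP nT.
set P := parentT a T in rP TP Pmin *.
have iP : i \in P := subsetP (proper_sub TP) i iT.
have T_sub_C : T \subset child P i.
  apply/subsetP => t tT; rewrite inE (subsetP (proper_sub TP)) //=.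
  have [//|ti] := eqVneq t i; have [_ [k kP kT]] := properP TP.
  have ik : i != k by apply: contraNneq kT => <-.
  have it : i != t by rewrite eq_sym.
  by have [_ /(le_lt_trans (alphaT_le iP kP ik))] := rameauP rT iT tT it kT.
apply/eqP; rewrite eq_sym eqEsubset T_sub_C /=; apply/subsetP => k kC.
apply/negPn/negP => kT.
have C2 : (2 <= #|child P i|)%N := leq_trans (rameau_card rT) (subset_leq_card T_sub_C).
have TC : T \proper child P i by apply/properP; split=> //; exists k.
have := Pmin _ (child_rameau rP iP C2) TC.
by rewrite leqNgt proper_card ?child_proper.
Qed.

Lemma rameau_ind (P : {set 'I_n} -> Prop) : P [set: 'I_n] ->
  (forall T, rameau a T -> T != [set: 'I_n] -> P (parentT a T) -> P T) ->
  forall T, rameau a T -> P T.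
Proof.
move=> P_setT P_parent T; have [k] := ubnP (n - #|T|); elim: k T => // k IH T hk rT.
have [->//|nT] := eqVneq T [set: 'I_n].
have [rP TP _] := parentP nT; apply: P_parent => //; apply: IH rP.
have := proper_card TP; have : (#|parentT a T| <= n)%N.
  by rewrite -[X in (_ <= X)%N]card_ord max_card.
lia.
Qed.

Lemma mout_eq T i j : rameau a T -> i \in T -> j \in T -> mout T i = mout T j.
Proof.
move=> rT iT jT; apply: eq_bigr => k kT.
by have [->//|ij] := eqVneq i j; have [] := rameauP rT iT jT ij kT.
Qed.

Lemma mout_ge0 T i : i \in T -> 0 <= mout T i.
Proof.
move=> iT; apply: sumr_ge0 => k kT; apply/ltW/mpos.
by apply: contraNneq kT => <-.
Qed.

Lemma mout_setT i : mout [set: 'I_n] i = 0.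
Proof. by rewrite /mout big_pred0 // => k; rewrite in_setT. Qed.

Lemma mout_parent T i : rameau a T -> T != [set: 'I_n] -> i \in T ->
  mout T i = mout (parentT a T) i + alphaT a (parentT a T) * #|parentT a T :\: T|%:R.
Proof.
move=> rT nT iT; have [_ TP _] := parentP nT; set P := parentT a T in TP *.
have iP : i \in P := subsetP (proper_sub TP) i iT.
rewrite /mout (bigID (mem P)) /= addrC; congr (_ + _).
  apply: eq_bigl => j; apply/andP/idP => [[]//|jP]; split=> //.
  by apply: contra jP; apply: subsetP (proper_sub TP) j.
rewrite (eq_bigl (fun j => j \in P :\: T)) => [|j]; last by rewrite in_setD.
rewrite (eq_bigr (fun _ => alphaT a P)) ?sumr_const ?mulr_natr // => j.
by rewrite in_setD => /andP [jT jP]; apply: mm_notin_child; rewrite // child_parent.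
Qed.

Lemma eigval_setT : eigval a [set: 'I_n] = gammaT a [set: 'I_n] * n%:R.
Proof.
rewrite /eigval (bigD1 [set: 'I_n]) /=; last by rewrite rameau_setT subxx.
rewrite big_pred0 ?addr0 ?cardsT ?card_ord // => U.
by rewrite subTset; case: eqP; rewrite ?andbF.
Qed.

Lemma eigval_parent T : rameau a T -> T != [set: 'I_n] ->
  eigval a T = gammaT a T * #|T|%:R + eigval a (parentT a T).
Proof.
move=> rT nT; have [rP TP _] := parentP nT; set P := parentT a T in rP TP *.
rewrite /eigval (bigD1 T) /=; last by rewrite rT subxx.
congr (_ + _); apply: eq_bigl => U; apply/idP/idP.
  case/andP => /andP [rU TU] UT; rewrite rU /=.
  by apply: parent_subset => //; rewrite properEneq eq_sym UT.
case/andP => rU PU; rewrite rU (subset_trans (proper_sub TP) PU) /=.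
by apply: contraTneq TP => UT; rewrite properE -UT PU andbF.
Qed.

Lemma eigvalE T i : rameau a T -> i \in T ->
  eigval a T = alphaT a T * #|T|%:R + mout T i.
Proof.
move=> rT; move: T rT i; apply: rameau_ind => [|T rT nT IHP] i iT.
  by rewrite eigval_setT mout_setT /gammaT eqxx addr0 cardsT card_ord.
have [_ TP _] := parentP nT; set P := parentT a T in IHP TP *.
have iP : i \in P := subsetP (proper_sub TP) i iT.
have cardP : #|P|%:R = #|T|%:R + #|P :\: T|%:R :> rat.
  by rewrite -natrD -(cardsID T P) (setIidPr (proper_sub TP)).
rewrite eigval_parent // (IHP i iP) (mout_parent rT nT iT) /gammaT (negbTE nT) cardP.
ring.
Qed.

Lemma eigval_gt0 T : rameau a T -> 0 < eigval a T.
Proof.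
move=> rT; have [i [j [iT jT ij alpha_ij]]] := alphaT_attained (rameau_card rT).
rewrite (eigvalE rT iT) alpha_ij; apply: ltr_wpDr (mout_ge0 iT) _.
by rewrite pmulr_rgt0 ?mpos // ltr0n (leq_trans _ (rameau_card rT)).
Qed.

Lemma eigval_int T : rameau a T -> (forall i j, i != j -> exists k : nat, m i j = k%:R) ->
  exists z : int, eigval a T = z%:~R.
Proof.
move=> rT m_nat; have [i [j [iT jT ij alpha_ij]]] := alphaT_attained (rameau_card rT).
have [c mij] := m_nat _ _ ij.
have [s mout_s] : exists s : nat, mout T i = s%:R.
  rewrite /mout; elim/big_rec: _ => [|k x kT [s ->]]; first by exists 0%N.
  have [d ->] : exists d : nat, m i k = d%:R by apply: m_nat; apply: contraNneq kT => <-.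
  by exists (d + s)%N; rewrite natrD.
exists (c * #|T| + s)%N.
by rewrite (eigvalE rT iT) alpha_ij mij mout_s -pmulrn natrD natrM.
Qed.

Lemma magic_mulE (u : 'cV[CC]_n) j :
  (magic a *m u) j 0 = \sum_k ratr (m j k) * (u j 0 - u k 0).
Proof.
rewrite mxE (bigD1 j) //= mxE eqxx [in RHS](bigD1 j) //= subrr mulr0 add0r.
rewrite /mrow rmorph_sum mulr_suml -big_split /=; apply: eq_bigr => k kj.
by rewrite mxE eq_sym (negbTE kj) mulrBr mulNr.
Qed.

Lemma magic_tr : (magic a)^T = magic a.
Proof. by apply/matrixP => i j; rewrite !mxE eq_sym; case: eqP => [->|_] //; rewrite msym. Qed.

Lemma inF_magic_mul (u : 'cV[CC]_n) : inF (magic a *m u).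
Proof.
rewrite /inF (eq_bigr (fun j => \sum_k ratr (m j k) * u j 0 - \sum_k ratr (m j k) * u k 0));
  last by move=> j _; rewrite magic_mulE -sumrB; apply: eq_bigr => k _; rewrite mulrBr.
rewrite sumrB [X in _ - X]exchange_big /=; apply/eqP; rewrite subr_eq0; apply/eqP.
by apply: eq_bigr => j _; apply: eq_bigr => k _; rewrite msym.
Qed.

(* A vector on [T], summing to zero and constant on each son of [T], is an
   eigenvector: inside [T] only the pairs across sons contribute, each with
   weight [alphaT T], and the mass outside [T] is seen identically from all of [T]. *)
Lemma magic_eigen_rameau T i (w : 'cV[CC]_n) : rameau a T -> i \in T ->
  (forall k, k \notin T -> w k 0 = 0) -> \sum_k w k 0 = 0 ->
  (forall j k, j \in T -> k \in T -> w j 0 != w k 0 -> m j k = alphaT a T) ->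
  magic a *m w = ratr (eigval a T) *: w.
Proof.
move=> rT iT w_out w_sum w_cross.
have w_sumT : \sum_(k in T) w k 0 = 0.
  rewrite -[RHS]w_sum [RHS](bigID (mem T)) /=.
  by rewrite [X in _ = _ + X]big1 ?addr0 // => k /w_out.
apply/matrixP => j z; rewrite (ord1 z) magic_mulE [RHS]mxE.
have [jT|jT] := boolP (j \in T); last first.
  rewrite w_out // mulr0 (eq_bigr (fun k => - (ratr (m i j) * w k 0))).
    by rewrite sumrN -mulr_sumr w_sum mulr0 oppr0.
  move=> k _; have [kT|kT] := boolP (k \in T); last by rewrite !w_out // subr0 !mulr0 oppr0.
  have [->|ki] := eqVneq k i; first by rewrite sub0r mulrN msym.
  by have [<- _] := rameauP rT kT iT ki jT; rewrite sub0r mulrN msym.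
rewrite (bigID (mem T)) /=.
rewrite (eq_bigr (fun k => ratr (alphaT a T) * (w j 0 - w k 0))) => [|k kT]; last first.
  by have [->|/(w_cross _ _ jT kT)->] := eqVneq (w j 0) (w k 0); rewrite ?subrr ?mulr0.
rewrite [X in _ + X](eq_bigr (fun k => ratr (m j k) * w j 0)) => [|k kT]; last first.
  by rewrite (w_out _ kT) subr0.
rewrite -mulr_sumr -mulr_suml sumrB sumr_const w_sumT -rmorph_sum.
rewrite -/(mout T j) (mout_eq rT jT iT) (eigvalE rT iT) rmorphD rmorphM rmorph_nat.
rewrite subr0 -mulr_natr; ring.
Qed.

Definition eigvec T i : 'cV[CC]_n :=
  \col_k (#|T :\: child T i|%:R * (k \in child T i)%:R -
          #|child T i|%:R * (k \in T :\: child T i)%:R).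

Lemma inF_eigvec T i : inF (eigvec T i).
Proof.
rewrite /inF; under eq_bigr do rewrite mxE.
by rewrite sumrB -!mulr_sumr !sum_indicator mulrC subrr.
Qed.

Lemma eigvec_eigen T i : rameau a T -> i \in T ->
  magic a *m eigvec T i = ratr (eigval a T) *: eigvec T i.
Proof.
move=> rT iT; apply: (magic_eigen_rameau rT iT _ (inF_eigvec T i)) => [k kT|j k jT kT].
  have kC : k \notin child T i by apply: contra kT; apply: subsetP (child_subset _ _) k.
  by rewrite mxE (negbTE kC) in_setD (negbTE kT) andbF !mulr0 subr0.
rewrite !mxE !in_setD jT kT !andbT.
have [jC|jC] := boolP (j \in child T i); have [kC|kC] := boolP (k \in child T i);
  rewrite ?eqxx //= => _.
- exact: mm_child_cross iT jC kT kC.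
- by rewrite msym; apply: mm_child_cross iT kC jT jC.
Qed.

Lemma eigvec_neq0 T i : rameau a T -> i \in T -> eigvec T i != 0.
Proof.
move=> rT iT; apply/negP => /eqP /matrixP /(_ i 0).
rewrite !mxE child_self // in_setD child_self //= mulr1 mulr0 subr0 => /eqP.
rewrite pnatr_eq0 cards_eq0 setD_eq0; apply/negP.
by move: (child_proper rT iT); rewrite properE => /andP [].
Qed.

Lemma sum_child_eq0 (u : 'cV[CC]_n) lam T i : magic a *m u = lam *: u ->
  lam != ratr (eigval a T) -> rameau a T -> i \in T ->
  \sum_(k in T) u k 0 = 0 -> \sum_(k in child T i) u k 0 = 0.
Proof.
move=> Mu lam_neq rT iT sumT0; set C := child T i.
have CT : T :&: C = C := setIidPr (child_subset _ _).
have sumD : \sum_(k in T :\: C) u k 0 = - \sum_(k in C) u k 0.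
  by move/eqP: sumT0; rewrite (big_setID C) /= CT addrC addr_eq0 => /eqP.
have cardT : #|T| = (#|T :\: C| + #|C|)%N by rewrite addnC -(cardsID C T) CT.
have /matrixP/(_ 0 0) := symmx_eigen_orth magic_tr Mu (eigvec_eigen rT iT) lam_neq.
rewrite !mxE (eq_bigr (fun k => u k 0 * eigvec T i k 0)) => [|k _]; last by rewrite !mxE.
under eq_bigr => k _ do rewrite mxE mulrBr mulrCA [u k 0 * (_ * _)]mulrCA.
rewrite sumrB -!mulr_sumr !sum_mulr_indicator sumD mulrN opprK -mulrDl -natrD -cardT.
by move/eqP; rewrite mulf_eq0 pnatr_eq0 eqn0Ngt (ltnW (rameau_card rT)) => /eqP.
Qed.

Lemma inF_eigen_eq0 (u : 'cV[CC]_n) lam : inF u -> magic a *m u = lam *: u ->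
  (forall T, rameau a T -> lam != ratr (eigval a T)) -> u = 0.
Proof.
move=> uF Mu lam_out.
have sum_rameau0 T : rameau a T -> \sum_(k in T) u k 0 = 0.
  move: T; apply: rameau_ind => [|T rT nT sumP0].
    by rewrite -[RHS]uF; apply: eq_bigl => k; rewrite in_setT.
  have [rP TP _] := parentP nT; have [i iT] := rameau_neq0 rT.
  rewrite -(child_parent rT nT iT).
  exact: sum_child_eq0 Mu (lam_out _ rP) rP (subsetP (proper_sub TP) i iT) sumP0.
apply/matrixP => i z; rewrite (ord1 z) mxE.
have [T rT Ci] := rameau_leaf i.
have iT : i \in T by apply: (subsetP (child_subset T i)); rewrite Ci set11.
by have := sum_child_eq0 Mu (lam_out _ rT) rT iT (sum_rameau0 _ rT); rewrite Ci big_set1.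
Qed.

End Ultrametric.

Theorem mainTheorem2 (n : nat) (a : 'I_n -> rat -> CC) :
  (2 <= n)%N ->
  (forall i, is_puiseux (a i)) ->
  (forall i j, a i = a j -> i = j) ->
  (forall i (q : rat), a i q != 0 -> 0 < q) ->
  (forall u : 'cV[CC]_n, inF u -> inF (magic a *m u)) /\
  (forall u : 'cV[CC]_n, inF u -> magic a *m u = 0 -> u = 0) /\
  (forall v : 'cV[CC]_n, inF v -> exists2 u : 'cV[CC]_n, inF u & magic a *m u = v) /\
  (forall lam : CC,
     (exists u : 'cV[CC]_n, [/\ inF u, u != 0 & magic a *m u = lam *: u]) <->
     (exists T1 : {set 'I_n}, rameau a T1 /\ lam = ratr (eigval a T1))) /\
  (forall T1 : {set 'I_n}, rameau a T1 -> 0 < eigval a T1) /\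
  ((forall i, is_power_series (a i)) ->
     forall T1 : {set 'I_n}, rameau a T1 -> exists z : int, eigval a T1 = z%:~R).
Proof.
move=> n_ge2 a_puiseux a_inj a_pos.
have msym := mmC a_puiseux a_inj a_pos.
have mpos := mm_gt0 a_puiseux a_inj a_pos.
have multra := mm_ultra a_puiseux a_inj a_pos.
have eig_gt0 := eigval_gt0 msym mpos multra n_ge2.
have MF := inF_magic_mul msym.
have Minj u : inF u -> magic a *m u = 0 -> u = 0.
  move=> uF Mu0; apply: (inF_eigen_eq0 msym multra n_ge2 uF (lam := 0)).
    by rewrite Mu0 scale0r.
  by move=> T rT; rewrite eq_sym fmorph_eq0 (lt0r_neq0 (eig_gt0 T rT)).
do 2!split=> //; split; first exact: inF_onto (ltnW n_ge2) MF Minj.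
split; last split=> // a_ps T rT.
  move=> lam; split=> [[u [uF u_neq0 Mu]]|[T [rT ->]]].
    apply: NNPP => lam_out; move/eqP: u_neq0; apply.
    apply: (inF_eigen_eq0 msym multra n_ge2 uF Mu) => T rT; apply/eqP => lamE.
    by apply: lam_out; exists T.
  have [i iT] := rameau_neq0 rT; exists (eigvec a T i); split.
  - exact: inF_eigvec.
  - exact: (eigvec_neq0 msym multra rT iT).
  - exact: (eigvec_eigen msym multra n_ge2 rT iT).
apply: (eigval_int msym multra n_ge2 rT) => i j.
exact: mm_nat a_puiseux a_inj a_pos i j a_ps.
Qed.
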